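(* Let $I\subseteq\mathbb{R}$ be an interval with nonempty interior. There is no mean on $I$ of type $\mathcal{T}_1$. Equivalently, there do not exist continuous functions $F\colon I\to\mathbb{R}$ and $G\colon \omega F(I)\to I$ such that $\mathscr{L}_{F,G}$ is a mean on $I$.
   Context: A mean on an interval $I$ is a function $\mathscr{M}\colon\bigcup_{n=1}^\infty I^n\to I$ with $\min(a)\le\mathscr{M}(a)\le\max(a)$ for every $a\in\bigcup_{n\ge1}I^n$. For a commutative semigroup $(Y,+)$ and $F\colon I\to Y$, let $\omega F(I):=\bigcup_{n=1}^\infty\{F(x_1)+\cdots+F(x_n): x_1,\dots,x_n\in I\}$. For $G\colon\omega F(I)\to I$ define $\mathscr{L}_{F,G}\colon\bigcup_{n\ge1}I^n\to I$ by $\mathscr{L}_{F,G}(a_1,\dots,a_n):=G(F(a_1)+\cdots+F(a_n))$. A mean $\mathscr{M}$ on $I$ is of type $\mathcal{T}_k$ ($k\in\mathbb{N}$) if $\mathscr{M}=\mathscr{L}_{F,G}$ for some continuous $F\colon I\to(\mathbb{R}^k,+)$ and some continuous $G\colon\omega F(I)\to I$ ($\omega F(I)$ carrying the subspace topology). *)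

From HB Require Import structures.
From mathcomp Require Import all_boot all_order all_algebra.
From mathcomp Require Import all_classical all_reals all_analysis.
Set Implicit Arguments. Unset Strict Implicit. Unset Printing Implicit Defensive.
Import Order.TTheory GRing.Theory Num.Theory.
Import numFieldNormedType.Exports.
Local Open Scope classical_set_scope.
Local Open Scope ring_scope.

(* A "function on \bigcup_{n>=1} I^n" is represented by its family of
   restrictions to tuples of length n.+1 : M n a, for a : 'I_n.+1 -> R. *)
Definition tuple_fun (R : realType) := forall n : nat, ('I_n.+1 -> R) -> R.

Definition in_tuple (R : realType) (I : set R) (n : nat) (a : 'I_n.+1 -> R) :=
  forall i, I (a i).

Definition is_mean (R : realType) (I : set R) (M : tuple_fun R) :=
  forall n (a : 'I_n.+1 -> R), in_tuple I a ->
    I (M n a) /\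
    \big[Order.min/a ord0]_(i < n.+1) a i <= M n a <= \big[Order.max/a ord0]_(i < n.+1) a i.

(* omega F (I) = { F(x_1) + ... + F(x_n) : n >= 1, x_i in I } (here k = 1, Y = R) *)
Definition omegaF (R : realType) (I : set R) (F : R -> R) : set R :=
  [set y | exists n (a : 'I_n.+1 -> R), in_tuple I a /\ y = \sum_(i < n.+1) F (a i)].

Definition LFG (R : realType) (F G : R -> R) : tuple_fun R :=
  fun n a => G (\sum_(i < n.+1) F (a i)).

Definition type_T1 (R : realType) (I : set R) (M : tuple_fun R) :=
  exists F G : R -> R,
    {within I, continuous F} /\
    {within omegaF I F, continuous G} /\
    (forall y, omegaF I F y -> I (G y)) /\
    (forall n (a : 'I_n.+1 -> R), in_tuple I a -> M n a = LFG F G a).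

(** Evaluating [L_{F,G}] on constant tuples, the mean property forces
    [G (n F(x)) = x] for all [x] in [I] and [n >= 1]; hence [n F(x) = m F(y)]
    implies [x = y].  In particular [F] is not constant on [I], so the
    continuous image [F(I)] is an interval containing two points [lo < hi].
    It then contains [v <> u] with [(n+2) u = (n+1) v] for some [n]: take
    [v = hi] if [hi > 0] (else [v = lo]) and [u = (n+1) v / (n+2)], which
    tends to [v] from inside.  Their preimages [x], [y] then satisfy
    [(n+2) F(x) = (n+1) F(y)], whence [x = y] and [u = v]. *)
From Pilot Require Import Defs.
From HB Require Import structures.
From mathcomp Require Import all_boot all_order all_algebra.
From mathcomp Require Import all_classical all_reals all_analysis.
From mathcomp Require Import lra.
Local Open Scope classical_set_scope.
Local Open Scope ring_scope.
Import numFieldNormedType.Exports.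
Import Order.TTheory GRing.Theory Num.Theory.

Section ArchiRealField.
Set Implicit Arguments.
Unset Strict Implicit.
Context {R : archiRealFieldType}.

Lemma mulrn_succ_eq_between (lo hi : R) : lo < hi ->
  exists n u v,
    [/\ lo <= u <= hi, lo <= v <= hi, u != v & u *+ n.+2 = v *+ n.+1].
Proof.
wlog hi_gt0 : lo hi / 0 < hi => [wlog lohi|lohi].
  have [hi_gt0|hi_le0] := ltP 0 hi; first exact: wlog.
  have [n [u [v [u_itv v_itv uv euv]]]] :=
    wlog (- hi) (- lo) ltac:(lra) ltac:(lra).
  exists n, (- u), (- v); split; [lra | lra | by rewrite eqr_opp |].
  by rewrite !mulNrn euv.
have [k k_gt] : exists k : nat, hi < k%:R * (hi - lo).
  exists (Num.bound (hi / (hi - lo))).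
  by rewrite -ltr_pdivrMr ?subr_gt0 // archi_boundP // divr_ge0 //; lra.
have k2_gt0 : 0 < k.+2%:R :> R by rewrite ltr0n.
pose u := hi *+ k.+1 / k.+2%:R.
have u_lt : u < hi.
  by rewrite ltr_pdivrMr // -[hi *+ _]mulr_natr ltr_pM2l // ltr_nat.
have u_ge : lo <= u.
  rewrite ler_pdivlMr // -[hi *+ _]mulr_natr -!natr1; lra.
have eq_u : u *+ k.+2 = hi *+ k.+1 by rewrite -mulr_natr divfK ?gt_eqF.
exists k, u, hi.
by split; rewrite ?lexx ?(ltW lohi) ?u_ge ?(ltW u_lt) ?lt_eqF.
Qed.

Lemma is_interval_mulrn_succ_eq (J : set R) x y :
  is_interval J -> J x -> J y -> x != y ->
  exists n u v, [/\ J u, J v, u != v & u *+ n.+2 = v *+ n.+1].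
Proof.
move=> J_itv Jx Jy; rewrite neq_lt => /orP x_lt_y.
wlog {x_lt_y} xy : x y Jx Jy / x < y => [wlog|].
  by case: x_lt_y => xy; [exact: (wlog x y) | exact: (wlog y x)].
have [n [u [v [u_xy v_xy uv euv]]]] := mulrn_succ_eq_between xy.
by exists n, u, v; split => //; apply: (J_itv x y).
Qed.

End ArchiRealField.

Section Real.
Set Implicit Arguments.
Unset Strict Implicit.
Context {R : realType}.

Lemma is_interval_continuous_image (I : set R) (F : R -> R) :
  is_interval I -> {within I, continuous F} -> is_interval (F @` I).
Proof.
move=> /connected_intervalP I_conn cF.
exact/connected_intervalP/connected_continuous_connected.
Qed.

Lemma nonempty_interior_lt (I : set R) :
  interior I !=set0 -> exists a b, [/\ I a, I b & a < b].
Proof.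
move=> [a aI]; exists a.
have near_right : \forall b \near a^'+, I b /\ a < b.
  by apply/near_andP; split; [exact: cvg_within | exact: nbhs_right_gt].
have [b [Ib ab]] := filter_ex (FF := at_right_proper_filter a) near_right.
by exists b; split => //; exact: nbhs_singleton.
Qed.

Lemma is_mean_eq (I : set R) (M M' : tuple_fun R) :
  is_mean I M -> (forall n a, Defs.in_tuple I a -> M n a = M' n a) ->
  is_mean I M'.
Proof. by move=> M_mean eqM n a Ia; rewrite -eqM //; exact: M_mean. Qed.

Lemma mean_cst (I : set R) (M : tuple_fun R) n x :
  is_mean I M -> I x -> M n (fun=> x) = x.
Proof.
move=> M_mean Ix; have [_] := M_mean n (fun=> x) (fun=> Ix).
have idem op k : op x x = x -> iter k (op x) x = x.
  by move=> opxx; elim: k => //= k ->.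
rewrite !big_const_ord !idem ?minxx ?maxxx // => Mx.
by apply/eqP; rewrite eq_le andbC.
Qed.

Lemma LFG_cst (F G : R -> R) n x :
  LFG F G (fun _ : 'I_n.+1 => x) = G (F x *+ n.+1).
Proof. by rewrite /LFG sumr_const card_ord. Qed.

Lemma LFG_mean_mulrn_inj (I : set R) (F G : R -> R) m n x y :
  is_mean I (LFG F G) -> I x -> I y -> F x *+ m.+1 = F y *+ n.+1 -> x = y.
Proof.
move=> L_mean Ix Iy eqF.
by rewrite -(mean_cst m L_mean Ix) -(mean_cst n L_mean Iy) !LFG_cst eqF.
Qed.

End Real.

Theorem proposition3p1 (R : realType) (I : set R) :
  is_interval I -> interior I !=set0 ->
  ~ exists M : tuple_fun R, is_mean I M /\ type_T1 I M.
Proof.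
move=> I_itv /nonempty_interior_lt [a [b [Ia Ib ab]]] [M [M_mean [F [G [cF [_ [_ ML]]]]]]].
have L_mean : is_mean I (LFG F G) := is_mean_eq M_mean ML.
have FaFb : F a != F b.
  apply: contraTneq ab => eqF.
  by rewrite (LFG_mean_mulrn_inj (m:=0) (n:=0) L_mean Ia Ib eqF) ltxx.
have [n [_ [_ [[x Ix <-] [y Iy <-] Fxy eqF]]]] :=
  is_interval_mulrn_succ_eq (is_interval_continuous_image I_itv cF)
    (imageP _ Ia) (imageP _ Ib) FaFb.
by move: Fxy; rewrite (LFG_mean_mulrn_inj L_mean Ix Iy eqF) eqxx.
Qed.
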